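(* Let $n\in\{1,3,7\}$ and let $m:\mathbb{S}^n\times\mathbb{S}^n\to\mathbb{S}^n$ be the multiplication map of unit complex numbers, quaternions or octonions respectively. Then $L_m(\mathbb{S}^n\times\mathbb{S}^n)=\sqrt{2}$.
   Context: $\mathbb{S}^n$ is the unit round sphere and $\mathbb{S}^n\times\mathbb{S}^n$ has the product Riemannian metric with its geodesic distance. $L_g(M)$ denotes the Lipschitz constant of a map $g$ on $M$, i.e. the smallest $C$ with $d(g(a),g(b))\le C\,d(a,b)$ for all $a,b\in M$. *)

From Stdlib Require Import Reals.
Open Scope R_scope.

(* Cayley--Dickson algebras: CD 0 = R, CD (k+1) = CD k * CD k.
   CD 1 = complex numbers, CD 2 = quaternions, CD 3 = octonions,
   each identified with R^(2^k) with its Euclidean structure. *)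
Fixpoint CD (k : nat) : Type :=
  match k with O => R | S k => (CD k * CD k)%type end.

Fixpoint cd_add (k : nat) : CD k -> CD k -> CD k :=
  match k return CD k -> CD k -> CD k with
  | O => Rplus
  | S k => fun x y => (cd_add k (fst x) (fst y), cd_add k (snd x) (snd y))
  end.

Fixpoint cd_opp (k : nat) : CD k -> CD k :=
  match k return CD k -> CD k with
  | O => Ropp
  | S k => fun x => (cd_opp k (fst x), cd_opp k (snd x))
  end.

Fixpoint cd_conj (k : nat) : CD k -> CD k :=
  match k return CD k -> CD k with
  | O => fun x => x
  | S k => fun x => (cd_conj k (fst x), cd_opp k (snd x))
  end.

(* (a,b)(c,d) = (ac - conj(d) b, d a + b conj(c))  (Cayley--Dickson doubling) *)
Fixpoint cd_mul (k : nat) : CD k -> CD k -> CD k :=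
  match k return CD k -> CD k -> CD k with
  | O => Rmult
  | S k => fun x y =>
      let a := fst x in let b := snd x in let c := fst y in let d := snd y in
      (cd_add k (cd_mul k a c) (cd_opp k (cd_mul k (cd_conj k d) b)),
       cd_add k (cd_mul k d a) (cd_mul k b (cd_conj k c)))
  end.

Fixpoint cd_inner (k : nat) : CD k -> CD k -> R :=
  match k return CD k -> CD k -> R with
  | O => Rmult
  | S k => fun x y => cd_inner k (fst x) (fst y) + cd_inner k (snd x) (snd y)
  end.

(* The algebra whose unit sphere is S^n: R^(n+1) = CD (log2 (n+1));
   for n = 1, 3, 7 this is C, H, O respectively. *)
Definition alg (n : nat) : Type := CD (Nat.log2 (S n)).
Definition alg_mul (n : nat) : alg n -> alg n -> alg n := cd_mul (Nat.log2 (S n)).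
Definition alg_inner (n : nat) : alg n -> alg n -> R := cd_inner (Nat.log2 (S n)).

Definition sphere (n : nat) := { x : alg n | alg_inner n x x = 1 }.

Definition sph_dist (n : nat) (x y : sphere n) : R :=
  acos (alg_inner n (proj1_sig x) (proj1_sig y)).

(* geodesic distance of the product Riemannian metric on S^n x S^n *)
Definition prod_dist (n : nat) (p q : sphere n * sphere n) : R :=
  sqrt (sph_dist n (fst p) (fst q) ^ 2 + sph_dist n (snd p) (snd q) ^ 2).

(* restriction of the algebra multiplication to S^n x S^n -> S^n
   (well-defined since C, H, O are normed algebras; the codomain is
    taken as the ambient algebra and distance measured as in S^n) *)
Definition sph_mul (n : nat) (p : sphere n * sphere n) : alg n :=
  alg_mul n (proj1_sig (fst p)) (proj1_sig (snd p)).

Definition lip_bound (n : nat) (C : R) : Prop :=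
  forall p q : sphere n * sphere n,
    acos (alg_inner n (sph_mul n p) (sph_mul n q)) <= C * prod_dist n p q.

Definition is_lipschitz_constant (n : nat) (L : R) : Prop :=
  lip_bound n L /\ forall C, lip_bound n C -> L <= C.

(* Upper bound: for unit x, x', y, y' the products x y and x' y' are joined through x' y,
   and in a composition algebra left and right multiplication by a unit are isometries,
   so d(xy, x'y') <= d(x, x') + d(y, y') <= sqrt 2 * sqrt (d(x, x')^2 + d(y, y')^2)
   by the spherical triangle inequality.
   Lower bound: with z = (1 + i)/sqrt 2 we have z^2 = i, so the points (1, 1) and (z, z),
   at product distance sqrt 2 * PI/4, are mapped to 1 and i, at distance PI/2. *)

From Stdlib Require Import Reals Lra Psatz.
Open Scope R_scope.

Fixpoint cd_scale (k : nat) (s : R) : CD k -> CD k :=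
  match k return CD k -> CD k with
  | O => fun x => s * x
  | S k => fun x => (cd_scale k s (fst x), cd_scale k s (snd x))
  end.

Lemma cd_inner_sym k (x y : CD k) : cd_inner k x y = cd_inner k y x.
Proof. induction k; simpl; [ring|]. now rewrite IHk, (IHk (snd x)). Qed.

Lemma cd_inner_addl k (x y z : CD k) :
  cd_inner k (cd_add k x y) z = cd_inner k x z + cd_inner k y z.
Proof. induction k; simpl; [ring|]. rewrite !IHk. ring. Qed.

Lemma cd_inner_addr k (x y z : CD k) :
  cd_inner k z (cd_add k x y) = cd_inner k z x + cd_inner k z y.
Proof. now rewrite cd_inner_sym, cd_inner_addl, !(cd_inner_sym k z). Qed.

Lemma cd_inner_scalel k s (x y : CD k) :
  cd_inner k (cd_scale k s x) y = s * cd_inner k x y.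
Proof. induction k; simpl; [ring|]. rewrite !IHk. ring. Qed.

Lemma cd_inner_scaler k s (x y : CD k) :
  cd_inner k x (cd_scale k s y) = s * cd_inner k x y.
Proof. now rewrite cd_inner_sym, cd_inner_scalel, cd_inner_sym. Qed.

Lemma cd_inner_ge0 k (x : CD k) : 0 <= cd_inner k x x.
Proof.
induction k; simpl; [nra|].
pose proof (IHk (fst x)); pose proof (IHk (snd x)); lra.
Qed.

Lemma Cauchy_Schwarz_add A B a a' b b' :
  0 <= a -> 0 <= a' -> 0 <= b -> 0 <= b' ->
  A * A <= a * a' -> B * B <= b * b' -> (A + B) * (A + B) <= (a + b) * (a' + b').
Proof.
intros Ha Ha' Hb Hb' HA HB.
(* (2AB)^2 <= 4 a a' b b' <= (a b' + a' b)^2 by AM-GM *)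
assert (Hcross : (2 * A * B) * (2 * A * B) <= (a * b' + a' * b) * (a * b' + a' * b)).
{ assert ((A * A) * (B * B) <= (a * a') * (b * b'))
    by (apply Rmult_le_compat; auto; apply Rle_0_sqr).
  pose proof (Rle_0_sqr (a * b' - a' * b)); unfold Rsqr in *; nra. }
assert (0 <= a * b') by now apply Rmult_le_pos.
assert (0 <= a' * b) by now apply Rmult_le_pos.
assert (2 * A * B <= a * b' + a' * b) by nra.
nra.
Qed.

Lemma cd_inner_Cauchy_Schwarz k (x y : CD k) :
  cd_inner k x y * cd_inner k x y <= cd_inner k x x * cd_inner k y y.
Proof.
induction k; simpl; [nra|].
apply Cauchy_Schwarz_add; try apply cd_inner_ge0; apply IHk.
Qed.

Lemma cd_inner_unit_bound k (x y : CD k) :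
  cd_inner k x x = 1 -> cd_inner k y y = 1 -> -1 <= cd_inner k x y <= 1.
Proof.
intros Hx Hy; pose proof (cd_inner_Cauchy_Schwarz k x y) as H.
rewrite Hx, Hy in H; nra.
Qed.

Lemma cd_inner_orth_proj k (a b c : CD k) : cd_inner k b b = 1 ->
  cd_inner k (cd_add k a (cd_scale k (- cd_inner k a b) b))
             (cd_add k c (cd_scale k (- cd_inner k c b) b))
  = cd_inner k a c - cd_inner k a b * cd_inner k b c.
Proof.
intros Hb.
rewrite !cd_inner_addl, !cd_inner_addr, !cd_inner_scalel, !cd_inner_scaler, Hb.
rewrite (cd_inner_sym k c b). ring.
Qed.

Lemma acos_le r g : -1 <= r <= 1 -> 0 <= g <= PI -> cos g <= r -> acos r <= g.
Proof.
intros Hr Hg Hc; pose proof (acos_bound r).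
destruct (Rle_or_lt (acos r) g) as [|Hlt]; auto.
pose proof (cos_decreasing_1 g (acos r) ltac:(lra) ltac:(lra) ltac:(lra) ltac:(lra) Hlt).
rewrite cos_acos in *; lra.
Qed.

(* the Gram determinant of three unit vectors with pairwise products p, q, r is
   nonnegative exactly when this hypothesis holds *)
Lemma acos_add_ge p q r : -1 <= p <= 1 -> -1 <= q <= 1 -> -1 <= r <= 1 ->
  (r - p * q) * (r - p * q) <= (1 - p * p) * (1 - q * q) ->
  acos r <= acos p + acos q.
Proof.
intros Hp Hq Hr Hgram.
pose proof (acos_bound p); pose proof (acos_bound q); pose proof (acos_bound r).
destruct (Rle_or_lt PI (acos p + acos q)); [lra|].
apply acos_le; [lra|lra|].
rewrite cos_plus, !cos_acos, !sin_acos by lra.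
assert (Hp2 : 0 <= 1 - p²) by (unfold Rsqr; nra).
assert (Hq2 : 0 <= 1 - q²) by (unfold Rsqr; nra).
pose proof (sqrt_pos (1 - p²)); pose proof (sqrt_pos (1 - q²)).
pose proof (sqrt_sqrt _ Hp2); pose proof (sqrt_sqrt _ Hq2).
unfold Rsqr in *.
set (sp := sqrt (1 - p * p)) in *; set (sq := sqrt (1 - q * q)) in *.
assert (Hprod : (r - p * q) * (r - p * q) <= (sp * sq) * (sp * sq)).
{ replace ((sp * sq) * (sp * sq)) with ((sp * sp) * (sq * sq)) by ring. congruence. }
assert (0 <= sp * sq) by now apply Rmult_le_pos.
nra.
Qed.

Lemma sph_triangle k (a b c : CD k) :
  cd_inner k a a = 1 -> cd_inner k b b = 1 -> cd_inner k c c = 1 ->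
  acos (cd_inner k a c) <= acos (cd_inner k a b) + acos (cd_inner k b c).
Proof.
intros Ha Hb Hc.
apply acos_add_ge; try now apply cd_inner_unit_bound.
pose proof (cd_inner_Cauchy_Schwarz k
  (cd_add k a (cd_scale k (- cd_inner k a b) b))
  (cd_add k c (cd_scale k (- cd_inner k c b) b))) as H.
rewrite !cd_inner_orth_proj, Ha, Hc, (cd_inner_sym k c b), (cd_inner_sym k b a) in H by exact Hb.
exact H.
Qed.

Lemma add_le_sqrt2_norm a b : 0 <= a -> 0 <= b ->
  a + b <= sqrt 2 * sqrt (a ^ 2 + b ^ 2).
Proof.
intros Ha Hb.
rewrite <- sqrt_mult by (lra || nra).
rewrite <- (sqrt_square (a + b)) by lra.
apply sqrt_le_1_alt. pose proof (Rle_0_sqr (a - b)); unfold Rsqr in *; nra.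
Qed.

Section CompositionAlgebra.

Variable k : nat.

Hypothesis cd_inner_mulr : forall x y z : CD k,
  cd_inner k (cd_mul k x z) (cd_mul k y z) = cd_inner k x y * cd_inner k z z.
Hypothesis cd_inner_mull : forall x y z : CD k,
  cd_inner k (cd_mul k x y) (cd_mul k x z) = cd_inner k x x * cd_inner k y z.

Lemma cd_mul_unit x y : cd_inner k x x = 1 -> cd_inner k y y = 1 ->
  cd_inner k (cd_mul k x y) (cd_mul k x y) = 1.
Proof. intros Hx Hy. rewrite cd_inner_mulr, Hx, Hy. ring. Qed.

Lemma cd_mul_sph_lipschitz (x x' y y' : CD k) :
  cd_inner k x x = 1 -> cd_inner k x' x' = 1 -> cd_inner k y y = 1 -> cd_inner k y' y' = 1 ->
  acos (cd_inner k (cd_mul k x y) (cd_mul k x' y'))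
    <= sqrt 2 * sqrt (acos (cd_inner k x x') ^ 2 + acos (cd_inner k y y') ^ 2).
Proof.
intros Hx Hx' Hy Hy'.
eapply Rle_trans; [apply (sph_triangle k _ (cd_mul k x' y)); now apply cd_mul_unit|].
rewrite cd_inner_mulr, Hy, Rmult_1_r, cd_inner_mull, Hx', Rmult_1_l.
apply add_le_sqrt2_norm; apply acos_bound.
Qed.

End CompositionAlgebra.

Ltac cd_coordinates :=
  intros; simpl in *; repeat match goal with p : prod _ _ |- _ => destruct p end;
  simpl; ring.

Lemma cd1_inner_mulr (x y z : CD 1) :
  cd_inner 1 (cd_mul 1 x z) (cd_mul 1 y z) = cd_inner 1 x y * cd_inner 1 z z.
Proof. cd_coordinates. Qed.
Lemma cd1_inner_mull (x y z : CD 1) :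
  cd_inner 1 (cd_mul 1 x y) (cd_mul 1 x z) = cd_inner 1 x x * cd_inner 1 y z.
Proof. cd_coordinates. Qed.
Lemma cd2_inner_mulr (x y z : CD 2) :
  cd_inner 2 (cd_mul 2 x z) (cd_mul 2 y z) = cd_inner 2 x y * cd_inner 2 z z.
Proof. cd_coordinates. Qed.
Lemma cd2_inner_mull (x y z : CD 2) :
  cd_inner 2 (cd_mul 2 x y) (cd_mul 2 x z) = cd_inner 2 x x * cd_inner 2 y z.
Proof. cd_coordinates. Qed.
Lemma cd3_inner_mulr (x y z : CD 3) :
  cd_inner 3 (cd_mul 3 x z) (cd_mul 3 y z) = cd_inner 3 x y * cd_inner 3 z z.
Proof. cd_coordinates. Qed.
Lemma cd3_inner_mull (x y z : CD 3) :
  cd_inner 3 (cd_mul 3 x y) (cd_mul 3 x z) = cd_inner 3 x x * cd_inner 3 y z.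
Proof. cd_coordinates. Qed.

Lemma lip_bound_sqrt2 n :
  let k := Nat.log2 (S n) in
  (forall x y z : CD k,
     cd_inner k (cd_mul k x z) (cd_mul k y z) = cd_inner k x y * cd_inner k z z) ->
  (forall x y z : CD k,
     cd_inner k (cd_mul k x y) (cd_mul k x z) = cd_inner k x x * cd_inner k y z) ->
  lip_bound n (sqrt 2).
Proof.
intros k Hr Hl [[x Hx] [y Hy]] [[x' Hx'] [y' Hy']].
exact (cd_mul_sph_lipschitz k Hr Hl x x' y y' Hx Hx' Hy Hy').
Qed.

Lemma sqrt2_le_of_bound C : PI / 2 <= C * sqrt ((PI / 4) ^ 2 + (PI / 4) ^ 2) -> sqrt 2 <= C.
Proof.
intros H; pose proof PI_RGT_0.
replace ((PI / 4) ^ 2 + (PI / 4) ^ 2) with (2 * (PI / 4) ^ 2) in H by ring.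
rewrite sqrt_mult, sqrt_pow2 in H by nra.
pose proof (sqrt_sqrt 2 ltac:(lra)); pose proof (sqrt_lt_R0 2 ltac:(lra)).
assert (2 <= C * sqrt 2) by nra.
nra.
Qed.

Lemma lip_bound_ge_sqrt2 n (C : R) (one z : alg n) :
  alg_inner n one one = 1 -> alg_inner n z z = 1 ->
  alg_inner n one z = / sqrt 2 ->
  alg_inner n (alg_mul n one one) (alg_mul n z z) = 0 ->
  lip_bound n C -> sqrt 2 <= C.
Proof.
intros H1 Hz H1z Hsq HC. apply sqrt2_le_of_bound.
specialize (HC (exist _ one H1, exist _ one H1) (exist _ z Hz, exist _ z Hz)).
unfold sph_mul, prod_dist, sph_dist in HC; simpl in HC.
now rewrite H1z, Hsq, acos_0, acos_inv_sqrt2 in HC.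
Qed.

Lemma inv_sqrt2_sq : / sqrt 2 * / sqrt 2 = 1 / 2.
Proof. rewrite <- Rinv_mult, sqrt_sqrt by lra. lra. Qed.

Ltac witness_conditions :=
  unfold alg_inner, alg_mul; simpl;
  pose proof inv_sqrt2_sq; set (t := / sqrt 2) in *; nra.

Theorem proposition3 (n : nat) (hn : (n = 1 \/ n = 3 \/ n = 7)%nat) :
  is_lipschitz_constant n (sqrt 2).
Proof.
destruct hn as [-> | [-> | ->]]; split.
- exact (lip_bound_sqrt2 1 cd1_inner_mulr cd1_inner_mull).
- intros C; apply (lip_bound_ge_sqrt2 1 C (1, 0) (/ sqrt 2, / sqrt 2));
    witness_conditions.
- exact (lip_bound_sqrt2 3 cd2_inner_mulr cd2_inner_mull).
- intros C; apply (lip_bound_ge_sqrt2 3 C ((1, 0), (0, 0)) ((/ sqrt 2, / sqrt 2), (0, 0)));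
    witness_conditions.
- exact (lip_bound_sqrt2 7 cd3_inner_mulr cd3_inner_mull).
- intros C; apply (lip_bound_ge_sqrt2 7 C (((1, 0), (0, 0)), ((0, 0), (0, 0)))
                                      (((/ sqrt 2, / sqrt 2), (0, 0)), ((0, 0), (0, 0))));
    witness_conditions.
Qed.
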